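(* A set $\mathbf D$ of tilings is a Condorcet super-domain if and only if for any three tilings $T_1,T_2,T_3\in\mathbf D$, the set $sm(T_1,T_2,T_3)=(T_1\cap T_2)\cup(T_2\cap T_3)\cup(T_1\cap T_3)$ is a tiling.
   Context: Fix an integer $n\ge 3$ and write $[n]=\{1,\dots,n\}$. Let $\Lambda$ be the set of 3-element subsets of $[n]$; a triple $\{i,j,k\}$ with $i<j<k$ is written $ijk$. For a 4-element subset $F=\{i<j<k<l\}$ of $[n]$, the stick of $F$ is the sequence $(ijk,\ ijl,\ ikl,\ jkl)$. A tiling (the inversion set of a rhombus tiling of the zonogon $Z(n;2)$) is a subset $T\subseteq\Lambda$ such that for every 4-element $F\subseteq[n]$, $T\cap\mathrm{stick}(F)$ is an initial segment or a final segment of the stick (empty set and whole stick allowed). For a finite set $V$ of odd cardinality and tilings $(T_v)_{v\in V}$, $sm((T_v)_{v\in V})$ is the set of triples lying in $T_v$ for more than $|V|/2$ indices $v$. A set $\mathbf D$ of tilings is a Condorcet super-domain if for every finite $V$ of odd cardinality and every family $(T_v)_{v\in V}$ with all $T_v\in\mathbf D$, $sm((T_v)_{v\in V})$ is a tiling. *)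

From mathcomp Require Import all_boot.
Set Implicit Arguments. Unset Strict Implicit. Unset Printing Implicit Defensive.

(* [n] is modelled by 'I_n (elements 0..n-1, same order as 1..n).
   A triple is a 3-element subset of 'I_n. *)
Definition Lambda (n : nat) : {set {set 'I_n}} := [set A : {set 'I_n} | #|A| == 3].

Definition init_or_final_segment (b : seq bool) : Prop :=
  exists m, m <= size b /\
    (b = nseq m true ++ nseq (size b - m) false \/
     b = nseq m false ++ nseq (size b - m) true).

Definition stick (n : nat) (i j k l : 'I_n) : seq {set 'I_n} :=
  [:: [set i; j; k]; [set i; j; l]; [set i; k; l]; [set j; k; l]].

Definition is_tiling (n : nat) (T : {set {set 'I_n}}) : Prop :=
  T \subset Lambda n /\
  forall i j k l : 'I_n, i < j -> j < k -> k < l ->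
    init_or_final_segment [seq A \in T | A <- stick i j k l].

Definition sm (n : nat) (V : finType) (T : V -> {set {set 'I_n}}) : {set {set 'I_n}} :=
  [set A : {set 'I_n} | #|V| < 2 * #|[set v : V | A \in T v]|].

Definition condorcet_super_domain (n : nat) (D : {set {set {set 'I_n}}}) : Prop :=
  forall (V : finType) (T : V -> {set {set 'I_n}}),
    odd #|V| -> (forall v, T v \in D) -> is_tiling (sm T).

(* A 4-term boolean sequence is an initial or final segment iff no three of
   its terms read x, ~~ x, x.  For (=>) take three voters.  For (<=), suppose
   the majority profile reads x, ~~ x, x on triples A, B, C of a stick.  The
   voters agreeing with the majority on A, on B and on C form three strict
   majorities of V, so they pairwise meet in voters u, w, t; the majority of
   T_u, T_w, T_t then reads x, ~~ x, x on A, B, C as well, which the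
   three-voter hypothesis forbids. *)

From mathcomp Require Import all_boot zify.
Set Implicit Arguments. Unset Strict Implicit. Unset Printing Implicit Defensive.

Definition between (x y z : bool) := (x == z) ==> (y == x).

Definition maj3 (x y z : bool) := (x && y || y && z) || x && z.

Definition sm3 (T : finType) (T1 T2 T3 : {set T}) : {set T} :=
  ((T1 :&: T2) :|: (T2 :&: T3)) :|: (T1 :&: T3).

Lemma in_sm3 (T : finType) (T1 T2 T3 : {set T}) (x : T) :
  (x \in sm3 T1 T2 T3) = maj3 (x \in T1) (x \in T2) (x \in T3).
Proof. by rewrite !inE. Qed.

Lemma sm3_id (T : finType) (T1 : {set T}) : sm3 T1 T1 T1 = T1.
Proof. by rewrite /sm3 !setIid !setUid. Qed.

Lemma init_or_final_segment4P b1 b2 b3 b4 :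
  init_or_final_segment [:: b1; b2; b3; b4] <->
  [&& between b1 b2 b3, between b1 b2 b4, between b1 b3 b4 & between b2 b3 b4].
Proof.
split=> [[m [le_m4 seg]] | between4].
  by case: m le_m4 seg => [|[|[|[|[|]]]]] //= _ [] [-> -> -> ->].
exists (count (pred1 b1) [:: b1; b2; b3; b4]).
by move: between4; case: b1; case: b2; case: b3; case: b4 => //= _;
  split=> //; by [left | right].
Qed.

Section Majority.

Variable V : finType.

Definition majority (p : pred V) := #|V| < 2 * #|[set v | p v]|.

Lemma majorities_meet (A B : {set V}) :
  #|V| < 2 * #|A| -> #|V| < 2 * #|B| -> A :&: B != set0.
Proof.
have := subset_leq_card (subsetT (A :|: B)); rewrite cardsT -card_gt0.
have := cardsUI A B; lia.
Qed.

Lemma majority_agree (p : pred V) :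
  odd #|V| -> #|V| < 2 * #|[set v | p v == majority p]|.
Proof.
move=> oddV; case: (boolP (majority p)) => [maj_p | maj_p].
  suff -> : [set v | p v == true] = [set v | p v] by [].
  by apply/setP => v; rewrite !inE eqb_id.
have -> : [set v | p v == false] = ~: [set v | p v].
  by apply/setP => v; rewrite !inE; case: (p v).
move: maj_p; rewrite /majority; have := cardsC [set v | p v].
rewrite -(odd_double_half #|V|) oddV; lia.
Qed.

Lemma between_majority (a b c : pred V) :
  odd #|V| ->
  (forall u w t, between (maj3 (a u) (a w) (a t)) (maj3 (b u) (b w) (b t))
                         (maj3 (c u) (c w) (c t))) ->
  between (majority a) (majority b) (majority c).
Proof.
move=> oddV maj3_between; apply/implyP => /eqP eq_ac; apply: contraT => neq_ba.
have agree_a := majority_agree a oddV; have agree_b := majority_agree b oddV.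
have agree_c := majority_agree c oddV; rewrite -eq_ac in agree_c.
have /set0Pn[u] := majorities_meet agree_a agree_b.
have /set0Pn[w] := majorities_meet agree_b agree_c.
have /set0Pn[t] := majorities_meet agree_a agree_c.
rewrite !inE => /andP[/eqP at_ /eqP ct] /andP[/eqP bw /eqP cw].
move=> /andP[/eqP au /eqP bu].
have := maj3_between u w t; rewrite au bu bw cw at_ ct.
by move: neq_ba (a w) (b t) (c u);
  case: (majority a); case: (majority b) => // _ [] [] [].
Qed.

Lemma segment4_majority (a b c d : pred V) :
  odd #|V| ->
  (forall u w t, init_or_final_segment
     [:: maj3 (a u) (a w) (a t); maj3 (b u) (b w) (b t);
         maj3 (c u) (c w) (c t); maj3 (d u) (d w) (d t)]) ->
  init_or_final_segment [:: majority a; majority b; majority c; majority d].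
Proof.
move=> oddV seg3; apply/init_or_final_segment4P.
by apply/and4P; split; apply: between_majority => // u w t;
  case/init_or_final_segment4P/and4P: (seg3 u w t).
Qed.

End Majority.

Section SimpleMajority.

Variable n : nat.

Lemma in_sm (V : finType) (T : V -> {set {set 'I_n}}) (A : {set 'I_n}) :
  (A \in sm T) = majority (fun v => A \in T v).
Proof. by rewrite inE. Qed.

Lemma sm_tuple3 (T1 T2 T3 : {set {set 'I_n}}) :
  sm (tnth [tuple T1; T2; T3]) = sm3 T1 T2 T3.
Proof.
apply/setP => A; rewrite in_sm in_sm3 /majority card_ord -sum1_card big_mkcond.
rewrite !big_ord_recl big_ord0 !inE /tnth /=.
by case: (A \in T1); case: (A \in T2); case: (A \in T3).
Qed.

Lemma sm_subset (V : finType) (T : V -> {set {set 'I_n}})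
    (L : {set {set 'I_n}}) :
  (forall v, T v \subset L) -> sm T \subset L.
Proof.
move=> sub_TL; apply/subsetP => A; rewrite in_sm /majority /= => maj_A.
move: (leq_ltn_trans (leq0n _) maj_A).
rewrite muln_gt0 => /andP[_ /card_gt0P[v]].
by rewrite inE => /(subsetP (sub_TL v)).
Qed.

Lemma is_tiling_sm (V : finType) (T : V -> {set {set 'I_n}}) :
  odd #|V| -> (forall u w t, is_tiling (sm3 (T u) (T w) (T t))) ->
  is_tiling (sm T).
Proof.
move=> oddV tiling3; split.
  by apply: sm_subset => v; rewrite -[T v]sm3_id; case: (tiling3 v v v).
move=> i j k l ij jk kl; rewrite /= !in_sm; apply: segment4_majority => // u w t.
by rewrite -!in_sm3; case: (tiling3 u w t) => _; apply.
Qed.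

End SimpleMajority.

Theorem theorem1 (n : nat) (hn : 3 <= n) (D : {set {set {set 'I_n}}})
    (hD : forall T, T \in D -> is_tiling T) :
  condorcet_super_domain D <->
  (forall T1 T2 T3, T1 \in D -> T2 \in D -> T3 \in D ->
     is_tiling (((T1 :&: T2) :|: (T2 :&: T3)) :|: (T1 :&: T3))).
Proof.
split=> [super T1 T2 T3 T1D T2D T3D | tiling3 V T oddV TD].
  rewrite -[_ :|: _]/(sm3 T1 T2 T3) -sm_tuple3; apply: super.
    by rewrite card_ord.
  by case=> [[|[|[|]]] ?].
by apply: is_tiling_sm => // u w t; apply: tiling3; apply: TD.
Qed.
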